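(* Let $\mathbb{F}$ be a field of characteristic not $2$. For every $\rho\in D$, the linear map $\phi_\rho:\hat{\mathcal{H}}\to\hat{\mathcal{H}}$ defined by $a_i\mapsto a_{i^\rho}$, $s_j\mapsto s_j$, $p_{\bar r,k}\mapsto \mathrm{sgn}(\rho)\,p_{\overline{r^\rho},k}$ is an automorphism of $\hat{\mathcal{H}}$, and the map $\rho\mapsto\phi_\rho$ is a faithful representation of $D$ as a group of automorphisms of $\hat{\mathcal{H}}$.
   Context: Notation: $\mathbb{N}=\{1,2,3,\dots\}$, $3\mathbb{N}=\{3,6,9,\dots\}$; for $r\in\mathbb{Z}$, $\bar r=r+3\mathbb{Z}\in\mathbb{Z}_3$. The algebra $\hat{\mathcal{H}}$ is the commutative $\mathbb{F}$-algebra with basis $\{a_i:i\in\mathbb{Z}\}\cup\{s_j:j\in\mathbb{N}\}\cup\{p_{\bar r,k}:\bar r\in\{\bar1,\bar2\},\ k\in 3\mathbb{N}\}$, where $s_0=0$, $p_{\bar r,j}=0$ for all $\bar r$ whenever $j\notin 3\mathbb{N}$, $p_{\bar 0,j}=-p_{\bar1,j}-p_{\bar2,j}$, $z_{\bar r,j}=p_{\bar r+\bar1,j}-p_{\bar r-\bar1,j}$, and for $i,i'\in\mathbb{Z}$, $j,l\in\mathbb{N}$, $h,k\in3\mathbb{N}$, $\bar r,\bar t\in\mathbb{Z}_3$: (H1) $a_ia_{i'}=\tfrac12(a_i+a_{i'})+s_{|i-i'|}+z_{\bar\imath,|i-i'|}$; (H2) $a_is_j=-\tfrac34a_i+\tfrac38(a_{i-j}+a_{i+j})+\tfrac32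 s_j-z_{\bar\imath,j}$; (H3) $a_ip_{\bar r,k}=\tfrac32p_{\bar r,k}-p_{-(\bar\imath+\bar r),k}$; (H4) $s_js_l=\tfrac34(s_j+s_l)-\tfrac38(s_{|j-l|}+s_{j+l})$; (H5) $s_jp_{\bar r,k}=\tfrac34(p_{\bar r,j}+p_{\bar r,k})-\tfrac38(p_{\bar r,|j-k|}+p_{\bar r,j+k})$; (H6) $p_{\bar r,h}p_{\bar t,k}=\tfrac14(z_{-(\bar r+\bar t),h}+z_{-(\bar r+\bar t),k})-\tfrac18(z_{-(\bar r+\bar t),|h-k|}+z_{-(\bar r+\bar t),h+k})$. For $k\in\tfrac12\mathbb{Z}$ let $\tau_k:\mathbb{Z}\to\mathbb{Z}$, $i\mapsto 2k-i$. Let $D=\langle\tau_0,\tau_{1/2}\rangle$ (the infinite dihedral group acting on $\mathbb{Z}$; its elements are the translations and the reflections $\tau_k$), and $\mathrm{sgn}:D\to\{\pm1\}$ with $\mathrm{sgn}(\rho)=-1$ for reflections and $1$ for translations. Write $i^\rho$ for the image of $i$ under $\rho$; for $\bar r\in\mathbb{Z}_3$ with representative $r$, $\overline{r^\rho}$ is well defined. *)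

From HB Require Import structures.
From mathcomp Require Import all_boot all_order all_algebra.
From mathcomp Require Import finmap.
From mathcomp.multinomials Require Import monalg.

Set Implicit Arguments.
Unset Strict Implicit.
Unset Printing Implicit Defensive.

Import Order.TTheory GRing.Theory Num.Theory.
Local Open Scope ring_scope.

(* Index set of the basis of \hat H:                                   *)
(*   inl i                 <-> a_i            (i : int)               *)
(*   inr (inl j)           <-> s_(j+1)        (j : nat, so s_1,s_2,..)*)
(*   inr (inr (false, m))  <-> p_(1bar, 3(m+1))                       *)
(*   inr (inr (true,  m))  <-> p_(2bar, 3(m+1))                       *)
Definition basis : Type := (int + (nat + (bool * nat)))%type.

Section Hhat.
Variable F : fieldType.

Definition Hhat := {malg F[basis]}.

Definition bvec (b : basis) : Hhat := << b >>.

Definition a_ (i : int) : Hhat := bvec (inl i).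

(* s_j for j : nat, with the convention s_0 = 0 *)
Definition s_ (j : nat) : Hhat :=
  if j is j'.+1 then bvec (inr (inl j')) else 0.

(* p_{rbar,k} for any representative r : int and any k : nat, with the
   conventions p_{rbar,k} = 0 unless k \in 3N, and
   p_{0bar,k} = - p_{1bar,k} - p_{2bar,k}. *)
Definition p_ (r : int) (k : nat) : Hhat :=
  if (0 < k)%N && (3 %| k)%N then
    let p1 := bvec (inr (inr (false, (k %/ 3).-1))) in
    let p2 := bvec (inr (inr (true, (k %/ 3).-1))) in
    if (r %% 3)%Z == 1 then p1
    else if (r %% 3)%Z == 2 then p2
    else - p1 - p2
  else 0.

Definition z_ (r : int) (j : nat) : Hhat := p_ (r + 1) j - p_ (r - 1) j.

Definition prep (b : bool) : int := if b then 2 else 1.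
Definition pk (m : nat) : nat := (3 * m.+1)%N.

Definition ndist (h k : nat) : nat := `|(h%:Z - k%:Z)|%N.

(* products of basis elements, (H1)-(H6) (and their commutative mirrors) *)
Definition mulB (x y : basis) : Hhat :=
  match x, y with
  | inl i, inl i' =>                                                (* H1 *)
      2^-1 *: (a_ i + a_ i') + s_ `|i - i'|%N + z_ i `|i - i'|%N
  | inl i, inr (inl j') | inr (inl j'), inl i =>                    (* H2 *)
      let j := j'.+1 in
      (- (3 / 4)) *: a_ i + (3 / 8) *: (a_ (i - j%:Z) + a_ (i + j%:Z))
      + (3 / 2) *: s_ j - z_ i j
  | inl i, inr (inr (b, m)) | inr (inr (b, m)), inl i =>            (* H3 *)
      (3 / 2) *: p_ (prep b) (pk m) - p_ (- (i + prep b)) (pk m)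
  | inr (inl j'), inr (inl l') =>                                   (* H4 *)
      let j := j'.+1 in let l := l'.+1 in
      (3 / 4) *: (s_ j + s_ l) - (3 / 8) *: (s_ (ndist j l) + s_ (j + l))
  | inr (inl j'), inr (inr (b, m)) | inr (inr (b, m)), inr (inl j') => (* H5 *)
      let j := j'.+1 in let k := pk m in let r := prep b in
      (3 / 4) *: (p_ r j + p_ r k)
      - (3 / 8) *: (p_ r (ndist j k) + p_ r (j + k))
  | inr (inr (b, m)), inr (inr (b', m')) =>                         (* H6 *)
      let h := pk m in let k := pk m' in
      let u := - (prep b + prep b') in
      (1 / 4) *: (z_ u h + z_ u k) - (1 / 8) *: (z_ u (ndist h k) + z_ u (h + k))
  end.

Definition hmul (x y : Hhat) : Hhat :=
  \sum_(b <- msupp x) \sum_(c <- msupp y) (x@_b * y@_c) *: mulB b c.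

End Hhat.

(* The infinite dihedral group D acting on Z: translations i |-> i + t *)
(* and reflections tau_k : i |-> 2k - i (k in Z/2), encoded by m = 2k. *)
Inductive dih : Type := Trans of int | Refl of int.

Definition dact (rho : dih) (i : int) : int :=
  match rho with Trans t => i + t | Refl m => m - i end.

Definition tau0 : dih := Refl 0.
Definition tau_half : dih := Refl 1.
Definition did : dih := Trans 0.

(* group law of D = composition of the maps of Z:
   dact (dcomp rho sigma) = dact rho \o dact sigma *)
Definition dcomp (rho sigma : dih) : dih :=
  match rho, sigma with
  | Trans t, Trans u => Trans (t + u)
  | Trans t, Refl n => Refl (n + t)
  | Refl m, Trans u => Refl (m - u)
  | Refl m, Refl n => Trans (m - n)
  end.

Definition dsgn (rho : dih) : int :=
  match rho with Trans _ => 1 | Refl _ => -1 end.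

Section Phi.
Variable F : fieldType.

Definition phiB (rho : dih) (b : basis) : Hhat F :=
  match b with
  | inl i => a_ F (dact rho i)
  | inr (inl j') => s_ F j'.+1
  | inr (inr (b, m)) => (dsgn rho)%:~R *: p_ F (dact rho (prep b)) (pk m)
  end.

Definition phi (rho : dih) (x : Hhat F) : Hhat F :=
  \sum_(b <- msupp x) x@_b *: phiB rho b.

End Phi.

From Pilot Require Import Defs.
From HB Require Import structures.
From mathcomp Require Import all_boot all_order all_algebra.
From mathcomp Require Import finmap.
From mathcomp.multinomials Require Import monalg.
From mathcomp Require Import zify ring.

(* Each phi_rho is the linear extension of a map on the basis, so only
   multiplicativity on products of basis vectors, i.e. on (H1)-(H6), needs
   checking.  Elements of D preserve |i - i'| and map the pair {i - j, i + j}
   to {i^rho - j, i^rho + j}; and as i^rho = +-i + e with -2e = e (mod 3),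
   they commute, modulo 3, with (r, t) |-> -(r + t), the index of (H3) and
   (H6).  The sign sgn(rho) squares away in (H6) and is absorbed by z, whose
   two terms a reflection swaps.  Relations (H3), (H5), (H6) for an arbitrary
   class r are consequences of the defining cases r = 1, 2: both sides are
   functions on Z/3 summing to zero.  The map rho |-> phi_rho respects
   composition because it does so on the basis, and it is faithful already
   on a_0 and a_1. *)

Set Implicit Arguments.
Unset Strict Implicit.
Unset Printing Implicit Defensive.

Import GRing.Theory.
Local Open Scope ring_scope.

Section LinearExtension.
Context {K : choiceType} {R : ringType}.
Implicit Types (x : {malg R[K]}) (k : K).

Definition lext {V : lmodType R} (f : K -> V) x : V :=
  \sum_(k <- msupp x) x@_k *: f k.

Section Codomain.
Context {V : lmodType R}.
Implicit Types (f g : K -> V).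

Lemma lextEw f (d : {fset K}) x :
  (msupp x `<=` d)%fset -> lext f x = \sum_(k <- d) x@_k *: f k.
Proof.
move=> le; apply: big_fset_incl => // k _ /mcoeff_outdom ->.
by rewrite scale0r.
Qed.

Lemma lext_is_linear f : linear (lext f).
Proof.
move=> c x y; pose d := (msupp x `|` msupp y `|` msupp (c *: x + y))%fset.
have sub z : z \in [:: x; y; c *: x + y] -> (msupp z `<=` d)%fset.
  rewrite !inE => /or3P[] /eqP -> {z}; apply/fsubsetP => k kz;
    by rewrite !inE kz ?orbT.
rewrite !(@lextEw f d) ?sub ?inE ?eqxx ?orbT // scaler_sumr -big_split.
by apply: eq_bigr => k _; rewrite mcoeffD mcoeffZ scalerDl scalerA.
Qed.

HB.instance Definition _ f :=
  GRing.isLinear.Build R {malg R[K]} V *:%R (lext f) (lext_is_linear f).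

Lemma lextU f k : lext f << k >> = f k.
Proof. by rewrite /lext msuppU oner_eq0 big_seq_fset1 mcoeffUU scale1r. Qed.

Lemma eq_lext f g : f =1 g -> lext f =1 lext g.
Proof. by move=> fg x; apply: eq_bigr => k _; rewrite fg. Qed.

Lemma linear_lext (W : lmodType R) (L : {linear V -> W}) f x :
  L (lext f x) = lext (L \o f) x.
Proof. by rewrite linear_sum; apply: eq_bigr => k _; rewrite linearZ. Qed.

End Codomain.

Lemma lext_mkmalgU x : lext (fun k => << k >>) x = x.
Proof.
rewrite {2}(monalgE x); apply: eq_bigr => k _.
by apply/malgP => k'; rewrite mcoeffZ !mcoeffU; case: eqP; rewrite ?mulr1 ?mulr0.
Qed.

End LinearExtension.

(* The shape of r |-> p_{r,k} and r |-> z_{r,k}: a function on Z/3 with zero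
   sum, as p_0 = - p_1 - p_2 in the paper. *)
Definition balanced3 {V : zmodType} (R : int -> V) : Prop :=
  (forall r r', (r = r' %[mod 3])%Z -> R r = R r') /\
  (forall a b c, (a <> b %[mod 3])%Z -> (b <> c %[mod 3])%Z -> (a <> c %[mod 3])%Z ->
     R a + R b + R c = 0).

Section Balanced.
Context {V : zmodType}.
Implicit Types (R S : int -> V) (a b c r : int).

Lemma balanced3_consecutive R :
  (forall r r', (r = r' %[mod 3])%Z -> R r = R r') ->
  (forall r, R r + R (r + 1) + R (r + 2) = 0) -> balanced3 R.
Proof.
move=> Rmod Rsum; split=> // a b c ab bc ac.
have [[/Rmod-> /Rmod->] | [/Rmod-> /Rmod->]] :
  (b = a + 1 %[mod 3] /\ c = a + 2 %[mod 3] \/ b = a + 2 %[mod 3] /\ c = a + 1 %[mod 3])%Z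
  by lia.
  exact: Rsum.
by rewrite addrAC Rsum.
Qed.

Lemma balanced3_eq R S : balanced3 R -> balanced3 S ->
  (forall b : bool, R (prep b) = S (prep b)) -> R =1 S.
Proof.
move=> [Rmod Rsum] [Smod Ssum] RS r.
have r012 : ((r = 0 %[mod 3]) \/ (r = 1 %[mod 3]) \/ (r = 2 %[mod 3]))%Z by lia.
case: r012 => [e|[e|e]]; rewrite (Rmod _ _ e) (Smod _ _ e).
- have R0 : R 0 + R 1 + R 2 = 0 by apply: Rsum; lia.
  have S0 : S 0 + S 1 + S 2 = 0 by apply: Ssum; lia.
  apply: (addIr (R 1 + R 2)).
  by rewrite addrA R0 (RS false) (RS true) addrA S0.
- exact: (RS false).
- exact: (RS true).
Qed.

Lemma balanced3D R S : balanced3 R -> balanced3 S -> balanced3 (fun r => R r + S r).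
Proof.
move=> [Rmod Rsum] [Smod Ssum]; split=> [r r' e | a b c ab bc ac].
  by rewrite (Rmod _ _ e) (Smod _ _ e).
by rewrite /= (addrACA (R a)) (addrACA (R a + R b)) Rsum // Ssum // addr0.
Qed.

Lemma balanced3N R : balanced3 R -> balanced3 (fun r => - R r).
Proof.
move=> [Rmod Rsum]; split=> [r r' /Rmod-> // | a b c ab bc ac].
by rewrite -!opprD Rsum // oppr0.
Qed.

Lemma balanced3_comp R (g : int -> int) :
  (forall r r', (g r = g r' %[mod 3])%Z <-> (r = r' %[mod 3])%Z) ->
  balanced3 R -> balanced3 (fun r => R (g r)).
Proof.
move=> gmod [Rmod Rsum]; split=> [r r' /gmod/Rmod // | a b c ab bc ac].
by apply: Rsum; apply/(contra_not (proj1 (gmod _ _))).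
Qed.

End Balanced.

Lemma balanced3_additive {V W : zmodType} (L : {additive V -> W}) (R : int -> V) :
  balanced3 R -> balanced3 (fun r => L (R r)).
Proof.
move=> [Rmod Rsum]; split=> [r r' /Rmod-> // | a b c ab bc ac].
by rewrite -!raddfD Rsum // raddf0.
Qed.

Lemma balanced3Z {K : ringType} {V : lmodType K} (k : K) (R : int -> V) :
  balanced3 R -> balanced3 (fun r => k *: R r).
Proof.
move=> [Rmod Rsum]; split=> [r r' /Rmod-> // | a b c ab bc ac].
by rewrite -!scalerDr Rsum // scaler0.
Qed.

Section Dihedral.
Implicit Types (rho sigma : dih) (i r t : int).

Lemma dact_mod3 rho r r' :
  (dact rho r = dact rho r' %[mod 3])%Z <-> (r = r' %[mod 3])%Z.
Proof. by case: rho => e /=; lia. Qed.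

Lemma dact_dist rho i i' : `|dact rho i - dact rho i'|%N = `|i - i'|%N.
Proof. by case: rho => e /=; lia. Qed.

Lemma dact_opp_add rho r t :
  (dact rho (- (r + t)) = - (dact rho r + dact rho t) %[mod 3])%Z.
Proof. by case: rho => e /=; lia. Qed.

Lemma dact_pair_sum (V : zmodType) (f : int -> V) rho i (j : int) :
  f (dact rho (i - j)) + f (dact rho (i + j)) = f (dact rho i - j) + f (dact rho i + j).
Proof. by case: rho => e /=; last rewrite addrC; congr (f _ + f _); ring. Qed.

Lemma dact_comp rho sigma i : dact (dcomp rho sigma) i = dact rho (dact sigma i).
Proof. by case: rho => e; case: sigma => e' /=; ring. Qed.

Lemma dsgn_comp rho sigma : dsgn (dcomp rho sigma) = dsgn rho * dsgn sigma.
Proof. by case: rho => e; case: sigma. Qed.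

Lemma dsgn_sqr (K : ringType) rho : (dsgn rho)%:~R * (dsgn rho)%:~R = 1 :> K.
Proof. by case: rho => e /=; rewrite ?mulrNN mulr1. Qed.

Definition dinv rho : dih :=
  match rho with Trans e => Trans (- e) | Refl e => Refl e end.

Lemma dcomp_invl rho : dcomp (dinv rho) rho = did.
Proof. by case: rho => e /=; rewrite ?addNr ?subrr. Qed.

Lemma dcomp_invr rho : dcomp rho (dinv rho) = did.
Proof. by case: rho => e /=; rewrite ?subrr. Qed.

Lemma dact_eq01 rho sigma :
  dact rho 0 = dact sigma 0 -> dact rho 1 = dact sigma 1 -> rho = sigma.
Proof.
by case: rho => e; case: sigma => e' /= e0 e1; [congr Trans | | | congr Refl]; lia.
Qed.

End Dihedral.

Section Hhat.
Variable F : fieldType.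
Local Notation H := (Hhat F).
Local Notation a_ := (a_ F).
Local Notation s_ := (s_ F).
Local Notation p_ := (p_ F).
Local Notation z_ := (z_ F).
Local Notation bvec := (bvec F).
Local Notation mulB := (mulB F).
Local Notation phi := (@phi F).
Local Notation hmul := (@hmul F).
Implicit Types (x y : H) (rho sigma : dih).

Lemma hhatP x y : (forall b, x@_b = y@_b) -> x = y.
Proof. exact: (malgP x y).1. Qed.

(* Here and for phi below, linear combinations are evaluated by
   syntax-directed [eapply] of *_eval lemmas rather than by rewriting:
   matching a rewrite rule against a basis vector would unfold the operations
   of {malg F[basis]}. *)
Lemma hcoeffD_eval x y b u v : x@_b = u -> y@_b = v -> (x + y)@_b = u + v.
Proof. by move=> <- <-; exact: mcoeffD. Qed.

Lemma hcoeffN_eval x b u : x@_b = u -> (- x)@_b = - u.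
Proof. by move=> <-; exact: mcoeffN. Qed.

Lemma hcoeffZ_eval c x b u : x@_b = u -> (c *: x)@_b = c * u.
Proof. by move=> <-; exact: mcoeffZ. Qed.

Ltac hcoeff_eval :=
  lazymatch goal with
  | |- (_ + _)@_ _ = _ => eapply hcoeffD_eval; [hcoeff_eval | hcoeff_eval]
  | |- (- _)@_ _ = _ => eapply hcoeffN_eval; hcoeff_eval
  | |- (_ *: _)@_ _ = _ => eapply hcoeffZ_eval; hcoeff_eval
  | |- (0)@_ _ = _ => exact: mcoeff0
  | |- _ => reflexivity
  end.

(* Identities between F-linear combinations of the named vectors, checked
   coefficientwise by [ring] once the vectors are abstracted. *)
Ltac lmod_ring :=
  repeat match goal with
  | |- context[Defs.p_ F ?r ?k] => generalize (Defs.p_ F r k)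
  | |- context[Defs.z_ F ?r ?k] => generalize (Defs.z_ F r k)
  | |- context[Defs.a_ F ?i] => generalize (Defs.a_ F i)
  | |- context[Defs.s_ F ?j] => generalize (Defs.s_ F j)
  | |- context[Defs.bvec F ?b] => generalize (Defs.bvec F b)
  end;
  intros; apply: hhatP => ?;
  eapply etrans; [hcoeff_eval |]; symmetry; eapply etrans; [hcoeff_eval |]; ring.

Lemma p_mod3 r r' k : (r = r' %[mod 3])%Z -> p_ r k = p_ r' k.
Proof. by rewrite /Defs.p_ => ->. Qed.

Lemma p_bvec (b : bool) m : p_ (prep b) (pk m) = bvec (inr (inr (b, m))).
Proof. by rewrite /Defs.p_ /pk muln_gt0 dvdn_mulr // mulKn //; case: b. Qed.

Lemma p_cases k : (forall r, p_ r k = 0) \/ exists m, k = pk m.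
Proof.
have [/andP[k0 /dvdnP[q kq]] | nk] := boolP ((0 < k)%N && (3 %| k)%N).
  by right; exists q.-1; rewrite /pk; lia.
by left => r; rewrite /Defs.p_ (negbTE nk).
Qed.

Lemma balanced3_p k : balanced3 (p_ ^~ k).
Proof.
apply: balanced3_consecutive => [r r' /p_mod3 // | r].
case: (p_cases k) => [p0 | [m ->]]; first by rewrite !p0 !addr0.
rewrite /Defs.p_ /pk muln_gt0 dvdn_mulr //=.
have [[-> [-> ->]] | [[-> [-> ->]] | [-> [-> ->]]]] :
  ((r %% 3 = 0 /\ (r + 1) %% 3 = 1 /\ (r + 2) %% 3 = 2) \/
   (r %% 3 = 1 /\ (r + 1) %% 3 = 2 /\ (r + 2) %% 3 = 0) \/
   (r %% 3 = 2 /\ (r + 1) %% 3 = 0 /\ (r + 2) %% 3 = 1))%Z by lia.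
all: lmod_ring.
Qed.

Lemma balanced3_z k : balanced3 (z_ ^~ k).
Proof.
rewrite /Defs.z_; apply: balanced3D; last apply: balanced3N;
  by apply: (balanced3_comp (R := p_ ^~ k) _ (balanced3_p k)) => r r'; lia.
Qed.

Lemma z_mod3 u u' k : (u = u' %[mod 3])%Z -> z_ u k = z_ u' k.
Proof. exact: (balanced3_z k).1. Qed.

Lemma z_dist i i' : z_ i `|i - i'|%N = z_ i' `|i - i'|%N.
Proof.
case: (p_cases `|i - i'|%N) => [p0 | [m im]]; first by rewrite /Defs.z_ !p0.
by apply: z_mod3; move: im; rewrite /pk; lia.
Qed.

Lemma mulBC b c : mulB b c = mulB c b.
Proof.
(* [mulB] is defined by symmetric or-patterns on the mixed cases *)
case: b => [i|[j|[b m]]]; case: c => [i'|[j'|[b' m']]]; cbn [Defs.mulB];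
  try match goal with |- ?x = ?x => reflexivity end.
- have -> : `|i' - i|%N = `|i - i'|%N by lia.
  rewrite z_dist; lmod_ring.
- have -> : ndist j'.+1 j.+1 = ndist j.+1 j'.+1 by rewrite /ndist; lia.
  rewrite addnC; lmod_ring.
- have -> : ndist (pk m') (pk m) = ndist (pk m) (pk m') by rewrite /ndist; lia.
  have -> : prep b' + prep b = prep b + prep b' by rewrite addrC.
  rewrite (addnC (pk m')); lmod_ring.
Qed.

Lemma hmulE x y : hmul x y = lext (fun b => lext (mulB b) y) x.
Proof.
apply: eq_bigr => b _; rewrite scaler_sumr; apply: eq_bigr => c _.
by rewrite scalerA.
Qed.

Lemma hmulEr x y : hmul x y = lext (fun c => lext (mulB ^~ c) x) y.
Proof.
rewrite /hmul exchange_big; apply: eq_bigr => c _; rewrite scaler_sumr.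
by apply: eq_bigr => b _; rewrite scalerA mulrC.
Qed.

Lemma hmul_is_linear x : linear (hmul x).
Proof. by move=> c y z; rewrite !hmulEr linearP. Qed.

HB.instance Definition _ x :=
  GRing.isLinear.Build F H H *:%R (hmul x) (hmul_is_linear x).

Lemma hmulC x y : hmul x y = hmul y x.
Proof.
rewrite hmulE hmulEr; apply: eq_lext => b; apply: eq_lext => c.
exact: mulBC.
Qed.

Lemma hmulU b c : hmul (bvec b) (bvec c) = mulB b c.
Proof. by rewrite hmulE !lextU. Qed.

Lemma hmulZr x c y : hmul x (c *: y) = c *: hmul x y.
Proof. exact: linearZ. Qed.

Lemma hmulZl x c y : hmul (c *: x) y = c *: hmul x y.
Proof. by rewrite hmulC hmulZr hmulC. Qed.

Lemma hmul_lextl f x y : hmul (lext f x) y = lext (fun b => hmul (f b) y) x.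
Proof. by rewrite hmulC linear_lext; apply: eq_lext => b /=; rewrite hmulC. Qed.

Lemma hmul_ap i r m :
  hmul (a_ i) (p_ r (pk m)) = (3 / 2) *: p_ r (pk m) - p_ (- (i + r)) (pk m).
Proof.
move: r; apply: balanced3_eq.
- exact: (balanced3_additive (hmul (a_ i)) (balanced3_p _)).
- apply: balanced3D; first exact: balanced3Z (balanced3_p _).
  apply: balanced3N.
  by apply: (balanced3_comp (R := p_ ^~ (pk m)) _ (balanced3_p _)) => r r'; lia.
- by move=> b; rewrite [in LHS]p_bvec hmulU.
Qed.

Lemma hmul_sp j r m :
  hmul (s_ j.+1) (p_ r (pk m)) =
  (3 / 4) *: (p_ r j.+1 + p_ r (pk m))
  - (3 / 8) *: (p_ r (ndist j.+1 (pk m)) + p_ r (j.+1 + pk m)).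
Proof.
move: r; apply: balanced3_eq.
- exact: (balanced3_additive (hmul (s_ j.+1)) (balanced3_p _)).
- by apply: balanced3D; [| apply: balanced3N]; apply: balanced3Z;
    apply: balanced3D; exact: balanced3_p.
- by move=> b; rewrite [in LHS]p_bvec hmulU.
Qed.

Definition zeta (u : int) (h k : nat) : H :=
  (1 / 4) *: (z_ u h + z_ u k) - (1 / 8) *: (z_ u (ndist h k) + z_ u (h + k)).

Lemma balanced3_zeta h k : balanced3 (fun u => zeta u h k).
Proof.
by apply: balanced3D; [| apply: balanced3N]; apply: balanced3Z;
  apply: balanced3D; exact: balanced3_z.
Qed.

Lemma hmul_pp r t m m' :
  hmul (p_ r (pk m)) (p_ t (pk m')) = zeta (- (r + t)) (pk m) (pk m').
Proof.
move: t; apply: balanced3_eq.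
- exact: (balanced3_additive (hmul (p_ r (pk m))) (balanced3_p _)).
- apply: (balanced3_comp (R := zeta ^~ (pk m) ^~ (pk m')) _ (balanced3_zeta _ _)).
  by move=> t t'; lia.
move=> b'; rewrite [in LHS]p_bvec hmulC; move: r; apply: balanced3_eq.
- exact: (balanced3_additive (hmul _) (balanced3_p _)).
- apply: (balanced3_comp (R := zeta ^~ (pk m) ^~ (pk m')) _ (balanced3_zeta _ _)).
  by move=> r r'; lia.
- by move=> b; rewrite [in LHS]p_bvec hmulU mulBC.
Qed.

HB.instance Definition _ rho := GRing.Linear.copy (phi rho) (lext (phiB F rho)).

Lemma phiD rho : {morph phi rho : x y / x + y}. Proof. exact: linearD. Qed.
Lemma phiN rho : {morph phi rho : x / - x}. Proof. exact: linearN. Qed.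
Lemma phiZ rho c x : phi rho (c *: x) = c *: phi rho x. Proof. exact: linearZ. Qed.

Lemma phiU rho b : phi rho (bvec b) = phiB F rho b.
Proof. exact: lextU. Qed.

Lemma phi_a rho i : phi rho (a_ i) = a_ (dact rho i).
Proof. exact: phiU. Qed.

Lemma phi_s rho j : phi rho (s_ j) = s_ j.
Proof. by case: j => [|j]; [exact: linear0 | exact: phiU]. Qed.

Lemma phi_p rho r k : phi rho (p_ r k) = (dsgn rho)%:~R *: p_ (dact rho r) k.
Proof.
case: (p_cases k) => [p0 | [m ->]]; first by rewrite !p0 linear0 scaler0.
move: r; apply: balanced3_eq.
- exact: (balanced3_additive (phi rho) (balanced3_p _)).
- exact: balanced3Z (balanced3_comp (R := p_ ^~ (pk m)) (dact_mod3 rho) (balanced3_p _)).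
- by move=> b; rewrite p_bvec phiU.
Qed.

Lemma phi_z rho u k : phi rho (z_ u k) = z_ (dact rho u) k.
Proof.
rewrite /Defs.z_ phiD phiN !phi_p; case: rho => t /=.
- have -> : u + 1 + t = u + t + 1 by ring.
  have -> : u - 1 + t = u + t - 1 by ring.
  lmod_ring.
- have -> : t - (u + 1) = t - u - 1 by ring.
  have -> : t - (u - 1) = t - u + 1 by ring.
  lmod_ring.
Qed.

Lemma phiD_eval rho x y u v : phi rho x = u -> phi rho y = v -> phi rho (x + y) = u + v.
Proof. by move=> <- <-; exact: phiD. Qed.

Lemma phiN_eval rho x u : phi rho x = u -> phi rho (- x) = - u.
Proof. by move=> <-; exact: phiN. Qed.

Lemma phiZ_eval rho c x u : phi rho x = u -> phi rho (c *: x) = c *: u.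
Proof. by move=> <-; exact: phiZ. Qed.

Ltac phi_eval :=
  lazymatch goal with
  | |- phi _ (_ + _) = _ => eapply phiD_eval; [phi_eval | phi_eval]
  | |- phi _ (- _) = _ => eapply phiN_eval; phi_eval
  | |- phi _ (_ *: _) = _ => eapply phiZ_eval; phi_eval
  | |- phi _ (Defs.a_ _ _) = _ => exact: phi_a
  | |- phi _ (Defs.s_ _ _) = _ => exact: phi_s
  | |- phi _ (Defs.p_ _ _ _) = _ => exact: phi_p
  | |- phi _ (Defs.z_ _ _ _) = _ => exact: phi_z
  end.

Ltac push_phi := eapply etrans; [phi_eval |].

Lemma phi_mulB_aa rho i i' :
  phi rho (mulB (inl i) (inl i')) = hmul (phiB F rho (inl i)) (phiB F rho (inl i')).
Proof. by rewrite hmulU; cbn [Defs.mulB Defs.phiB]; push_phi; rewrite dact_dist. Qed.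

Lemma phi_mulB_as rho i j :
  phi rho (mulB (inl i) (inr (inl j))) =
  hmul (phiB F rho (inl i)) (phiB F rho (inr (inl j))).
Proof. by rewrite hmulU; cbn [Defs.mulB Defs.phiB]; push_phi; rewrite (dact_pair_sum a_). Qed.

Lemma phi_mulB_ap rho i b m :
  phi rho (mulB (inl i) (inr (inr (b, m)))) =
  hmul (phiB F rho (inl i)) (phiB F rho (inr (inr (b, m)))).
Proof.
cbn [Defs.mulB Defs.phiB]; rewrite hmulZr hmul_ap; push_phi.
by rewrite (p_mod3 (pk m) (dact_opp_add rho i (prep b))); lmod_ring.
Qed.

Lemma phi_mulB_ss rho j l :
  phi rho (mulB (inr (inl j)) (inr (inl l))) =
  hmul (phiB F rho (inr (inl j))) (phiB F rho (inr (inl l))).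
Proof. by rewrite hmulU; cbn [Defs.mulB Defs.phiB]; push_phi. Qed.

Lemma phi_mulB_sp rho j b m :
  phi rho (mulB (inr (inl j)) (inr (inr (b, m)))) =
  hmul (phiB F rho (inr (inl j))) (phiB F rho (inr (inr (b, m)))).
Proof. by cbn [Defs.mulB Defs.phiB]; rewrite hmulZr hmul_sp; push_phi; lmod_ring. Qed.

Lemma phi_mulB_pp rho b m b' m' :
  phi rho (mulB (inr (inr (b, m))) (inr (inr (b', m')))) =
  hmul (phiB F rho (inr (inr (b, m)))) (phiB F rho (inr (inr (b', m')))).
Proof.
cbn [Defs.mulB Defs.phiB]; rewrite hmulZl hmulZr hmul_pp scalerA dsgn_sqr scale1r.
rewrite /zeta; push_phi.
by rewrite !(z_mod3 _ (dact_opp_add rho (prep b) (prep b'))).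
Qed.

Lemma phi_mulB rho b c : phi rho (mulB b c) = hmul (phiB F rho b) (phiB F rho c).
Proof.
have mirror b' c' : phi rho (mulB b' c') = hmul (phiB F rho b') (phiB F rho c') ->
    phi rho (mulB c' b') = hmul (phiB F rho c') (phiB F rho b').
  by rewrite mulBC hmulC.
case: b => [i|[j|[b m]]]; case: c => [i'|[j'|[b' m']]].
- exact: phi_mulB_aa.
- exact: phi_mulB_as.
- exact: phi_mulB_ap.
- exact/mirror/phi_mulB_as.
- exact: phi_mulB_ss.
- exact: phi_mulB_sp.
- exact/mirror/phi_mulB_ap.
- exact/mirror/phi_mulB_sp.
- exact: phi_mulB_pp.
Qed.

Lemma phi_mul rho x y : phi rho (hmul x y) = hmul (phi rho x) (phi rho y).
Proof.
rewrite hmulE linear_lext -[phi rho x]/(lext _ x) hmul_lextl.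
apply: eq_lext => b /=; rewrite linear_lext -[phi rho y]/(lext _ y) linear_lext.
by apply: eq_lext => c /=; rewrite phi_mulB.
Qed.

Lemma phi_comp rho sigma x : phi (dcomp rho sigma) x = phi rho (phi sigma x).
Proof.
rewrite -[phi sigma x]/(lext _ x) linear_lext; apply: eq_lext => -[i|[j|[b m]]] /=.
- by rewrite phi_a dact_comp.
- by rewrite phiU.
- by rewrite phiZ phi_p dact_comp dsgn_comp intrM scalerA mulrC.
Qed.

Lemma phi_id x : phi did x = x.
Proof.
rewrite -[RHS]lext_mkmalgU; apply: eq_lext => -[i|[j|[b m]]] /=.
- by rewrite addr0.
- by [].
- by rewrite scale1r addr0 p_bvec.
Qed.

Lemma phi_bij rho : bijective (phi rho).
Proof.
by exists (phi (dinv rho)) => x; rewrite -phi_comp ?dcomp_invl ?dcomp_invr phi_id.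
Qed.

Lemma a_inj : injective a_.
Proof.
move=> i i' /(congr1 (mcoeff (inl i))); rewrite !mcoeffU eqxx.
by case: eqP => [[]|] // _ /eqP; rewrite oner_eq0.
Qed.

Lemma phi_inj : injective phi.
Proof. by move=> rho sigma e; apply: dact_eq01; apply: a_inj; rewrite -!phi_a e. Qed.

End Hhat.

Theorem proposition3p5 (F : fieldType) (hF : (2 : F) != 0) :
  (* each phi_rho is an (algebra) automorphism of \hat H *)
  (forall rho : dih,
      (forall (c : F) (x y : Hhat F), @phi F rho (c *: x + y) = c *: @phi F rho x + @phi F rho y)
   /\ (forall x y : Hhat F, @phi F rho (hmul x y) = hmul (@phi F rho x) (@phi F rho y))
   /\ bijective (@phi F rho))
  (* rho |-> phi_rho is a group homomorphism from D ... *)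
  /\ (forall rho sigma : dih, @phi F (dcomp rho sigma) =1 @phi F rho \o @phi F sigma)
  /\ @phi F did =1 id
  (* ... which is faithful (injective) *)
  /\ injective (@phi F).
Proof.
split; first by move=> rho; split; [exact: linearP | split; [exact: phi_mul | exact: phi_bij]].
split; first by move=> rho sigma x; exact: phi_comp.
by split; [exact: phi_id | exact: phi_inj].
Qed.
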